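(* There is a deterministic distributed dynamic data structure for $2$-hop neighborhood listing which handles edge insertions and deletions in $O\left(\frac{n}{\log n}\right)$ amortized rounds.
   Context: Highly dynamic network model: a synchronous network on a fixed set $V$ of $n$ nodes with unique identifiers starts as the empty graph; at the beginning of round $i$ the graph is $G_i=(V,E_i)$, obtained from the previous graph by an adversary inserting and/or deleting an arbitrary (unbounded) set of edges. At the start of each round every node is notified only of the insertions/deletions of edges incident to it; then each node may send a message of $O(\log n)$ bits to each of its current neighbors. A distributed dynamic data structure consists of a local part $DS_v$ at each node $v$; at the end of every round, $DS_v$ may be queried and must answer immediately, without any further communication, either correctly or with $\texttt{inconsistent}$. The amortized round complexity is at most $c$ if for every round $i$, the number of rounds up to round $i$ in which at least one node $v$ has $DS_v$ in an inconsistent state, divided by the total number of topology changes that occurred up to round $i$, is at most $c$. Let $E^{v,2}_i$ be the set of edges of $G_i$ incident to $v$ or to a neighbor of $v$. $2$-hop neighborhood listing: $DS_v$ must respond at the end of round $i$ to a query $\{u,w\}$ with $\texttt{true}$ if $\{u,w\}\in E^{v,2}_i$, $\texttt{false}$ otherwise, or $\texttt{inconsistent}$. *)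

From mathcomp Require Import all_boot.
Set Implicit Arguments.
Unset Strict Implicit.
Unset Printing Implicit Defensive.

(* Nodes are 'I_n; the identifier of a node is its index. *)

(* A dynamic graph: G i is the graph of round i (G 0 is the initial empty
   graph, before round 1).  Graphs are simple: symmetric irreflexive. *)
Definition dyn_graph (n : nat) := nat -> rel 'I_n.

Definition wf_dyn_graph n (G : dyn_graph n) : Prop :=
  (forall u w, G 0 u w = false) /\
  (forall i, symmetric (G i)) /\ (forall i, irreflexive (G i)).

Definition msg := seq bool.

(* Each node has a local state of type [state].
   - [init v]: initial state of node v (node knows its identifier and n);
   - [notify s ins del]: local update when the node is notified of the
     inserted / deleted edges incident to it (given by the other endpoints);
   - [send s u]: message (if any) sent to neighbor u in this round;
   - [receive s r]: local update on receiving r u from each neighbor u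
     (r u = None if u is not a neighbor or sent nothing);
   - [query s u w]: immediate answer to query {u,w}; None = inconsistent. *)
Record dist_alg (n : nat) := DistAlg {
  state : Type;
  init : 'I_n -> state;
  notify : state -> {set 'I_n} -> {set 'I_n} -> state;
  send : state -> 'I_n -> option msg;
  receive : state -> ('I_n -> option msg) -> state;
  query : state -> 'I_n -> 'I_n -> option bool
}.

Section Exec.
Variables (n : nat) (A : dist_alg n) (G : dyn_graph n).

(* edges incident to v inserted / deleted at the beginning of round i.+1 *)
Definition inserted (i : nat) (v : 'I_n) : {set 'I_n} :=
  [set u | G i.+1 v u && ~~ G i v u].
Definition deleted (i : nat) (v : 'I_n) : {set 'I_n} :=
  [set u | G i v u && ~~ G i.+1 v u].

(* exec i v = state of DS_v at the end of round i (exec 0 = initial). *)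
Fixpoint exec (i : nat) : 'I_n -> state A :=
  match i with
  | 0 => init A
  | i'.+1 =>
      let s1 := fun v => notify (exec i' v) (inserted i' v) (deleted i' v) in
      fun v => receive (s1 v)
                 (fun u => if G i'.+1 u v then send (s1 u) v else None)
  end.

Definition changes_in (i : nat) : nat :=
  #|[set p : 'I_n * 'I_n | (p.1 < p.2) && (G i.+1 p.1 p.2 != G i p.1 p.2)]|.

Definition changes_upto (i : nat) : nat := \sum_(j < i) changes_in j.

Definition in_2hop (i : nat) (v u w : 'I_n) : bool :=
  G i u w && [|| u == v, w == v, G i v u | G i v w].

Definition some_inconsistent (i : nat) : bool :=
  [exists v, exists u, exists w, (u != w) && (query (exec i v) u w == None)].

Definition inconsistent_rounds (i : nat) : nat :=
  \sum_(1 <= j < i.+1) some_inconsistent j.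

End Exec.

(* Messages have at most c * log n bits (log n made positive by +1). *)
Definition msg_bounded n (A : dist_alg n) (c : nat) : Prop :=
  forall (s : state A) (u : 'I_n) (m : msg),
    send s u = Some m -> size m <= c * (trunc_log 2 n).+1.

Definition two_hop_listing_correct n (A : dist_alg n) : Prop :=
  forall G : dyn_graph n, wf_dyn_graph G ->
  forall (i : nat) (v u w : 'I_n), u != w ->
  forall b, query (exec A G i v) u w = Some b -> b = in_2hop G i v u w.

From mathcomp Require Import all_boot zify.
(* Every node streams its adjacency vector to its neighbours, one block of
   about log n bits per round, cycling through the about n / log n blocks, and
   flags the rounds in which its own adjacency changed.  A node v trusts its
   copy of a neighbour u's adjacency once a full cycle of blocks has arrived
   since u last changed; queries involving only v, trusted neighbours or
   non-neighbours are then answered exactly.  Hence if some node is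
   inconsistent in round j, some topology change happened in one of the
   n / log n rounds before j, so each change accounts for at most n / log n
   inconsistent rounds. *)

Set Implicit Arguments.
Unset Strict Implicit.
Unset Printing Implicit Defensive.

Lemma count_window_le (m K : nat) (s : seq nat) :
  uniq s -> count (fun j => m < j <= m + K) s <= K.
Proof.
move=> s_uniq; rewrite -size_filter -[leqRHS](size_iota m.+1).
apply: uniq_leq_size; first exact: filter_uniq.
by move=> j; rewrite mem_filter mem_iota addSn ltnS => /andP[].
Qed.

Lemma sum_le_window_causes (f : nat -> bool) (c : nat -> nat) (K i : nat) :
  (forall j, 0 < j <= i -> f j -> exists2 m, m < j <= m + K & 0 < c m) ->
  \sum_(1 <= j < i.+1) f j <= K * \sum_(m < i) c m.
Proof.
move=> cause; rewrite -(big_mkord xpredT).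
pose w m j : nat := m < j <= m + K.
apply: (@leq_trans (\sum_(1 <= j < i.+1) \sum_(0 <= m < i) w m j * c m)).
  rewrite !big_nat; apply: leq_sum => j /andP[j_gt0 j_le].
  case fj: (f j) => //; have [m /andP[lt_mj le_jm] cm_gt0] := cause j (ltac:(lia)) fj.
  rewrite (bigD1_seq m) ?iota_uniq //=; last by rewrite mem_iota; lia.
  by rewrite /w lt_mj le_jm mul1n (leq_trans cm_gt0) ?leq_addr.
rewrite exchange_big big_distrr /=; apply: leq_sum => m _.
rewrite -big_distrl /= leq_mul2r; apply/orP; right.
rewrite (eq_bigr (fun j => if m < j <= m + K then 1 else 0)); last first.
  by move=> j _; rewrite /w; case: (m < j <= m + K).
by rewrite -big_mkcond sum1_count count_window_le ?iota_uniq.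
Qed.

Lemma exists_mod_in_window (K m r : nat) :
  r < K -> exists2 j, m <= j < m + K & j %% K = r.
Proof.
move=> lt_rK; have K_gt0 : 0 < K by case: K lt_rK.
exists (m + (r + K - m %% K) %% K); first by rewrite leq_addr ltn_add2l ltn_pmod.
rewrite modnDmr.
have -> : m + (r + K - m %% K) = (m %/ K).+1 * K + r.
  by have := divn_eq m K; have := ltn_pmod m K_gt0; lia.
by rewrite modnMDl modn_small.
Qed.

Lemma trunc_log_leq p n : trunc_log p n <= n.
Proof.
case: (ltnP 1 p) => [p_gt1|p_le1]; last first.
  by have /eqP-> : trunc_log p n == 0 by rewrite trunc_log_eq0 p_le1.
by rewrite -[leqRHS](trunc_expnK n p_gt1); apply/leq_trunc_log/ltnW/ltn_expl.
Qed.

Section TwoHopAlgorithm.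
Variable n : nat.

Definition block_size := maxn 1 (trunc_log 2 n).
Definition nblocks := n %/ block_size + 1.

(* [ns_copy s u] is the node's copy of the adjacency vector of its neighbour u
   and [ns_age s u] the number of rounds since u last flagged a change (0 when
   u is not a neighbour).  Block b of an adjacency vector consists of the bits
   x with x / block_size = b; in round r + 1 block r mod nblocks is sent. *)
Record node_state := NodeState {
  ns_id : 'I_n;
  ns_round : nat;
  ns_adj : 'I_n -> bool;
  ns_changed : bool;
  ns_copy : 'I_n -> 'I_n -> bool;
  ns_age : 'I_n -> nat }.

Definition tl_init (v : 'I_n) : node_state :=
  NodeState v 0 (fun _ => false) false (fun _ _ => false) (fun _ => 0).

Definition tl_notify (s : node_state) (ins del : {set 'I_n}) : node_state :=
  NodeState (ns_id s) (ns_round s)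
    (fun x => (ns_adj s x && (x \notin del)) || (x \in ins))
    [exists x, (x \in ins) || (x \in del)] (ns_copy s)
    (fun u => if (u \in ins) || (u \in del) then 0 else ns_age s u).

Definition adj_block (s : node_state) : seq bool :=
  mkseq (fun t => [exists y : 'I_n,
    (y == (ns_round s %% nblocks) * block_size + t :> nat) && ns_adj s y]) block_size.

Definition tl_send (s : node_state) (u : 'I_n) : option msg :=
  Some (ns_changed s :: adj_block s).

Definition tl_receive (s : node_state) (rcv : 'I_n -> option msg) : node_state :=
  NodeState (ns_id s) (ns_round s).+1 (ns_adj s) (ns_changed s)
    (fun u x => match rcv u with
                | Some (_ :: bits) =>
                    if x %/ block_size == ns_round s %% nblocks
                    then nth false bits (x %% block_size) else ns_copy s u x
                | _ => ns_copy s u x end)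
    (fun u => match rcv u with
              | Some (changed :: _) => if changed then 1 else (ns_age s u).+1
              | _ => 0 end).

Definition tl_query (s : node_state) (u w : 'I_n) : option bool :=
  if u == ns_id s then Some (ns_adj s w) else
  if w == ns_id s then Some (ns_adj s u) else
  if ns_adj s u && (nblocks <= ns_age s u) then Some (ns_copy s u w) else
  if ns_adj s w && (nblocks <= ns_age s w) then Some (ns_copy s w u) else
  if ~~ ns_adj s u && ~~ ns_adj s w then Some false else None.

Definition two_hop_alg : dist_alg n :=
  DistAlg tl_init tl_notify tl_send tl_receive tl_query.

Lemma block_size_gt0 : 0 < block_size.
Proof. by rewrite leq_max. Qed.

Lemma two_hop_alg_msg_bounded : msg_bounded two_hop_alg 2.
Proof. by move=> s u m [<-]; rewrite /= size_mkseq /block_size; lia. Qed.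

Lemma nblocks_mul_log_leq : 1 < n -> nblocks * trunc_log 2 n <= 2 * n.
Proof.
move=> n_gt1; have log_gt0 : 0 < trunc_log 2 n by rewrite trunc_log_gt0.
rewrite /nblocks /block_size (maxn_idPr log_gt0) mulnDl mul1n.
by have := leq_divM n (trunc_log 2 n); have := trunc_log_leq 2 n; lia.
Qed.

Variable G : dyn_graph n.
Hypothesis G_wf : wf_dyn_graph G.

Local Notation ds i v := (exec two_hop_alg G i v).

Definition notified (i : nat) (v : 'I_n) : node_state :=
  tl_notify (ds i v) (inserted G i v) (deleted G i v).

Lemma ds_succ i v : ds i.+1 v =
  tl_receive (notified i v) (fun u => if G i.+1 u v then tl_send (notified i u) v else None).
Proof. by []. Qed.

Lemma ds_id i v : ns_id (ds i v) = v.
Proof. by elim: i v. Qed.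

Lemma ds_round i v : ns_round (ds i v) = i.
Proof. by elim: i v => //= i IH v; rewrite IH. Qed.

Lemma adj_update i v x :
  (G i v x && (x \notin deleted G i v)) || (x \in inserted G i v) = G i.+1 v x.
Proof. by rewrite !inE; case: (G i v x); case: (G i.+1 v x). Qed.

Lemma ds_adj i v x : ns_adj (ds i v) x = G i v x.
Proof.
elim: i v x => [|i IH] v x /=; first by case: G_wf => ->.
by rewrite IH adj_update.
Qed.

Lemma notified_changedP i u :
  reflect (exists y, G i.+1 u y != G i u y) (ns_changed (notified i u)).
Proof.
apply: (iffP existsP) => -[y changed]; exists y; move: changed;
  by rewrite /inserted /deleted !inE; case: (G i u y); case: (G i.+1 u y).
Qed.

Lemma changes_in_gt0 i a b : G i.+1 a b != G i a b -> 0 < changes_in G i.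
Proof.
case: G_wf => _ [G_sym G_irr] changed; rewrite /changes_in card_gt0.
have neq_ab : a != b by apply: contraNneq changed => ->; rewrite !G_irr.
case: (ltngtP a b) => [lt_ab|lt_ba|/val_inj eq_ab]; last by rewrite eq_ab eqxx in neq_ab.
  by apply/set0Pn; exists (a, b); rewrite inE /= lt_ab.
by apply/set0Pn; exists (b, a); rewrite inE /= lt_ba G_sym [G i b a]G_sym.
Qed.

Lemma adj_block_notified i u (x : 'I_n) : x %/ block_size = i %% nblocks ->
  nth false (adj_block (notified i u)) (x %% block_size) = G i.+1 u x.
Proof.
move=> x_block; rewrite nth_mkseq ?ltn_pmod ?block_size_gt0 //=.
rewrite ds_round -x_block -divn_eq.
apply/existsP/idP => [[y /andP[/eqP/val_inj-> ]]|Gux]; first by rewrite ds_adj adj_update.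
by exists x; rewrite eqxx ds_adj adj_update.
Qed.

Lemma ds_copy_succ i v u x : G i.+1 v u ->
  ns_copy (ds i.+1 v) u x =
  if x %/ block_size == i %% nblocks then G i.+1 u x else ns_copy (ds i v) u x.
Proof.
case: G_wf => _ [G_sym _] Gvu.
rewrite ds_succ /= G_sym Gvu /= ds_round.
by case: eqP => // x_block; rewrite adj_block_notified.
Qed.

Lemma ds_age_succ i v u : G i.+1 v u ->
  ns_age (ds i.+1 v) u =
  if ns_changed (notified i u) then 1 else (ns_age (notified i v) u).+1.
Proof. by case: G_wf => _ [G_sym _] Gvu; rewrite ds_succ /= G_sym Gvu. Qed.

Lemma notified_age i v u : G i.+1 v u = G i v u ->
  ns_age (notified i v) u = ns_age (ds i v) u.
Proof.
by move=> unchanged; rewrite /= /inserted /deleted !inE unchanged; case: (G i v u).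
Qed.

(* Round i - age is the last round in which u's adjacency changed, so every
   block received from u since then is still accurate. *)
Definition age_invariant (i : nat) : Prop := forall v u, G i v u ->
  [/\ 0 < ns_age (ds i v) u <= i,
      0 < changes_in G (i - ns_age (ds i v) u) &
      forall (x : 'I_n) j, i - ns_age (ds i v) u <= j < i ->
        x %/ block_size = j %% nblocks -> ns_copy (ds i v) u x = G i u x].

Lemma age_invariant_succ i : age_invariant i -> age_invariant i.+1.
Proof.
case: G_wf => _ [G_sym _] inv v u Gvu; rewrite ds_age_succ //.
case: (notified_changedP i u) => [[y changed_uy]|unchanged].
  split=> //; first by rewrite subn1 (changes_in_gt0 changed_uy).
  move=> x j; rewrite subn1 => /andP[le_ij lt_ji]; have -> : j = i by lia.
  by move=> x_block; rewrite ds_copy_succ // x_block eqxx.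
have Gu_eq y : G i.+1 u y = G i u y.
  by apply/eqP/negPn/negP => changed; apply: unchanged; exists y.
have Gvu_eq : G i.+1 v u = G i v u by rewrite G_sym Gu_eq G_sym.
have Gvu_i : G i v u by rewrite -Gvu_eq.
have [age_bounds change copy_ok] := inv v u Gvu_i.
rewrite notified_age // subSS; split=> [|//|x j /andP[le_j lt_j] x_block].
  by rewrite ltnS; case/andP: age_bounds.
rewrite ds_copy_succ // x_block; case: eqP => // neq_ji.
rewrite Gu_eq; apply: copy_ok x_block; rewrite le_j ltn_neqAle -ltnS lt_j andbT.
by apply/eqP => eq_ji; apply: neq_ji; rewrite eq_ji.
Qed.

Lemma age_invariant_all i : age_invariant i.
Proof.
elim: i => [|i IH]; last exact: age_invariant_succ.
by case: G_wf => G0 _ v u; rewrite G0.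
Qed.

Lemma ds_copy_complete i v u x : G i v u -> nblocks <= ns_age (ds i v) u ->
  ns_copy (ds i v) u x = G i u x.
Proof.
move=> Gvu age_ge; have [/andP[_ age_le] _ copy_ok] := age_invariant_all Gvu.
have x_block : x %/ block_size < nblocks by rewrite /nblocks addn1 ltnS leq_div2r // ltnW.
have [j /andP[le_j lt_j] j_block] := exists_mod_in_window (i - ns_age (ds i v) u) x_block.
by apply: (copy_ok x j) => //; apply/andP; split; lia.
Qed.

Lemma two_hop_alg_query_correct i v u w b :
  query (ds i v) u w = Some b -> b = in_2hop G i v u w.
Proof.
case: G_wf => _ [G_sym _]; rewrite /= /tl_query ds_id !ds_adj /in_2hop.
have [->|_] := eqVneq u v; first by move=> [<-]; rewrite andbT.
have [->|_] := eqVneq w v; first by move=> [<-]; rewrite G_sym andbT.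
case: ifP => [/andP[Gvu age_u] [<-]|_]; first by rewrite ds_copy_complete // Gvu andbT.
case: ifP => [/andP[Gvw age_w] [<-]|_]; first by rewrite ds_copy_complete // G_sym Gvw !orbT andbT.
by case: ifP => // /andP[/negbTE-> /negbTE->] [<-]; rewrite andbF.
Qed.

Lemma inconsistent_recent_change j : some_inconsistent two_hop_alg G j ->
  exists2 m, m < j <= m + nblocks & 0 < changes_in G m.
Proof.
case/existsP=> v /existsP[u /existsP[w /andP[_ /eqP]]].
have young z : G j v z -> ns_age (ds j v) z < nblocks ->
    exists2 m, m < j <= m + nblocks & 0 < changes_in G m.
  move=> Gvz age_lt; have [/andP[age_gt0 age_le] change _] := age_invariant_all Gvz.
  by exists (j - ns_age (ds j v) z) => //; apply/andP; split; lia.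
rewrite /= /tl_query ds_id !ds_adj; case: eqP => // _; case: eqP => // _.
case Gvu: (G j v u) => /=; first by case: leqP => // age_u _; apply: (young u).
by case Gvw: (G j v w) => //=; case: leqP => // age_w _; apply: (young w).
Qed.

End TwoHopAlgorithm.

Theorem lemma10 :
  exists (cmsg C N0 : nat) (A : forall n, dist_alg n),
    forall n : nat,
      msg_bounded (A n) cmsg /\
      two_hop_listing_correct (A n) /\
      (N0 <= n ->
       forall G : dyn_graph n, wf_dyn_graph G ->
       forall i : nat,
         inconsistent_rounds (A n) G i * trunc_log 2 n
           <= C * n * changes_upto G i).
Proof.
exists 2, 2, 2, two_hop_alg => n; split; first exact: two_hop_alg_msg_bounded.
split; first by move=> G G_wf i v u w _ b; apply: two_hop_alg_query_correct.
move=> n_ge2 G G_wf i.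
have count_le : inconsistent_rounds (two_hop_alg n) G i <= nblocks n * changes_upto G i.
  exact: sum_le_window_causes (fun j _ => inconsistent_recent_change G_wf (j := j)).
apply: leq_trans (leq_mul count_le (leqnn (trunc_log 2 n))) _.
by rewrite mulnAC leq_mul2r nblocks_mul_log_leq ?orbT.
Qed.
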